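(* Let $a,b,\alpha,\beta$ be variables and let $n\ge 1$ be a natural number. There exist polynomials in $a,b,\alpha,\beta$ with integer coefficients, denoted $\Psi\left(\begin{array}{cc|c} a & b & n \\ \alpha & \beta & r \end{array}\right)$ for $0\le r\le \lfloor n/2\rfloor$ and $\Phi\left(\begin{array}{cc|c} a & b & n \\ \alpha & \beta & r \end{array}\right)$ for $0\le r\le \lfloor (n-1)/2\rfloor$, depending only on $a,b,\alpha,\beta,n,r$, such that the following polynomial identities in $x,y$ hold: \[ (\beta a-\alpha b)^{\lfloor n/2\rfloor}\frac{x^n+y^n}{(x+y)^{\delta(n)}}=\sum_{r=0}^{\lfloor n/2\rfloor}\Psi\left(\begin{array}{cc|c} a & b & n \\ \alpha & \beta & r \end{array}\right)(\alpha x^2+\beta xy+\alpha y^2)^{\lfloor n/2\rfloor-r}(ax^2+bxy+ay^2)^r, \] \[ (\beta a-\alpha b)^{\lfloor (n-1)/2\rfloor}\frac{x^n-y^n}{(x-y)(x+y)^{\delta(n-1)}}=\sum_{r=0}^{\lfloor (n-1)/2\rfloor}\Phi\left(\begin{array}{cc|c} a & b & n \\ \alpha & \beta & r \end{array}\right)(\alpha x^2+\beta xy+\alpha y^2)^{\lfloor (n-1)/2\rfloor-r}(ax^2+bxy+ay^2)^r. \]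
   Context: $\delta(m)=1$ if $m$ is odd and $\delta(m)=0$ if $m$ is even; $\lfloor m/2\rfloor$ is the largest integer $\le m/2$. Note $\frac{x^n+y^n}{(x+y)^{\delta(n)}}$ and $\frac{x^n-y^n}{(x-y)(x+y)^{\delta(n-1)}}$ are polynomials in $x,y$. *)

From HB Require Import structures.
From mathcomp Require Import all_boot all_order all_algebra.
From mathcomp Require Import mpoly.
Set Implicit Arguments. Unset Strict Implicit. Unset Printing Implicit Defensive.
Import GRing.Theory.
Local Open Scope ring_scope.

Definition V6 (k : nat) : {mpoly int[6]} := 'X_(inord k).
Definition va := V6 0.
Definition vb := V6 1.
Definition valpha := V6 2.
Definition vbeta := V6 3.
Definition vx := V6 4.
Definition vy := V6 5.

Definition lift4 (p : {mpoly int[4]}) : {mpoly int[6]} :=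
  p \mPo [tuple va; vb; valpha; vbeta].

Definition Qalpha : {mpoly int[6]} := valpha * vx ^+ 2 + vbeta * vx * vy + valpha * vy ^+ 2.
Definition Qa : {mpoly int[6]} := va * vx ^+ 2 + vb * vx * vy + va * vy ^+ 2.
Definition Delta : {mpoly int[6]} := vbeta * va - valpha * vb.

From HB Require Import structures.
From mathcomp Require Import all_boot all_order all_algebra.
From mathcomp Require Import mpoly ring.
Set Implicit Arguments.
Unset Strict Implicit.
Unset Printing Implicit Defensive.
Import GRing.Theory.
Local Open Scope ring_scope.

(* Write s = x^2 + y^2 and p = xy, so that Qalpha = alpha s + beta p and
   Qa = a s + b p; inverting this system expresses Delta s and Delta p as
   integral combinations of Qalpha and Qa.  Writing n = 2m + odd n, each
   quotient q of the theorem is cut out by an equation L q = A x^(2m) +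
   B y^(2m), hence equals w_m for a sequence with w_(m+2) = s w_(m+1) -
   p^2 w_m (characteristic roots x^2 and y^2), w_0 an integer and w_1 an
   integral combination of s and p.  Multiplying the recurrence by
   Delta^(m+2) shows inductively that Delta^m w_m is a form of degree m in
   Qalpha and Qa. *)

Section SecondOrderRecurrence.

Variables (R : comRingType) (s t w0 w1 : R).

Fixpoint lucas_pair (m : nat) : R * R :=
  if m is m'.+1 then
    let w := lucas_pair m' in (w.2, s * w.2 - t * w.1)
  else (w0, w1).

Definition lucas (m : nat) : R := (lucas_pair m).1.

Lemma lucas0 : lucas 0 = w0. Proof. by []. Qed.
Lemma lucas1 : lucas 1 = w1. Proof. by []. Qed.
Lemma lucasSS m : lucas m.+2 = s * lucas m.+1 - t * lucas m.
Proof. by []. Qed.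

Lemma lucas_roots (X Y L A B : R) :
    s = X + Y -> t = X * Y -> L * w0 = A + B -> L * w1 = A * X + B * Y ->
  forall m, L * lucas m = A * X ^+ m + B * Y ^+ m.
Proof.
move=> sE tE h0 h1; elim/ltn_ind => -[|[|m]] IH.
- by rewrite lucas0 h0 !expr0 !mulr1.
- by rewrite lucas1 h1 !expr1.
have {}IH0 := IH m (leqnSn _); have {IH}IH1 := IH m.+1 (leqnn _).
have -> : L * lucas m.+2 = (X + Y) * (L * lucas m.+1) - X * Y * (L * lucas m).
  by rewrite lucasSS sE tE; ring.
by rewrite IH0 IH1 !exprS; ring.
Qed.

End SecondOrderRecurrence.

HB.instance Definition _ :=
  GRing.RMorphism.copy lift4 (comp_mpoly [tuple va; vb; valpha; vbeta]).

Lemma lift4X (i : nat) : (i < 4)%N -> lift4 'X_(inord i) = V6 i.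
Proof.
move=> lti4; rewrite /lift4 comp_mpolyXU inordK //.
by case: i lti4 => [|[|[|[|]]]].
Qed.

Definition qcomb (m : nat) (c : nat -> {mpoly int[4]}) : {mpoly int[6]} :=
  \sum_(r < m.+1) lift4 (c r) * Qalpha ^+ (m - r) * Qa ^+ r.

Definition qform (m : nat) (X : {mpoly int[6]}) : Prop := exists c, X = qcomb m c.

Lemma qformD m X Y : qform m X -> qform m Y -> qform m (X + Y).
Proof.
move=> [c ->] [d ->]; exists (fun r => c r + d r); rewrite /qcomb -big_split.
by apply: eq_bigr => r _; rewrite rmorphD !mulrDl.
Qed.

Lemma qformZ m p X : qform m X -> qform m (lift4 p * X).
Proof.
move=> [c ->]; exists (fun r => p * c r); rewrite /qcomb mulr_sumr.
by apply: eq_bigr => r _; rewrite rmorphM !mulrA.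
Qed.

Lemma qformB m X Y : qform m X -> qform m Y -> qform m (X - Y).
Proof.
move=> hX hY; apply: qformD hX _.
by have := qformZ (-1) hY; rewrite rmorphN1 mulN1r.
Qed.

Lemma qform_lift4 p : qform 0 (lift4 p).
Proof. by exists (fun=> p); rewrite /qcomb big_ord1 !expr0 !mulr1. Qed.

Lemma qformMQalpha m X : qform m X -> qform m.+1 (Qalpha * X).
Proof.
move=> [c ->]; exists (fun r => if (r <= m)%N then c r else 0).
rewrite /qcomb [RHS]big_ord_recr /= ltnn rmorph0 !mul0r addr0 mulr_sumr.
apply: eq_bigr => r _ /=; rewrite -ltnS ltn_ord subSn -1?ltnS // exprS; ring.
Qed.

Lemma qformMQa m X : qform m X -> qform m.+1 (Qa * X).
Proof.
move=> [c ->]; exists (fun r => if r is r'.+1 then c r' else 0).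
rewrite /qcomb [RHS]big_ord_recl /= rmorph0 !mul0r add0r mulr_sumr.
by apply: eq_bigr => r _; rewrite /bump /= add1n subSS exprS; ring.
Qed.

Lemma qcomb1 c : qcomb 1 c = lift4 (c 0%N) * Qalpha + lift4 (c 1%N) * Qa.
Proof. by rewrite /qcomb !big_ord_recr big_ord0 /= !expr0 !expr1 !mulr1 add0r. Qed.

Lemma qform1M m X Y : qform 1 X -> qform m Y -> qform m.+1 (X * Y).
Proof.
move=> [c ->] hY; rewrite qcomb1 mulrDl -!mulrA.
by apply: qformD; apply: qformZ; [apply: qformMQalpha | apply: qformMQa].
Qed.

Definition vs : {mpoly int[6]} := vx ^+ 2 + vy ^+ 2.
Definition vp : {mpoly int[6]} := vx * vy.

Lemma qform_Delta_vs : qform 1 (Delta * vs).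
Proof.
exists (fun r => if r is 0%N then - 'X_(inord 1) else 'X_(inord 3)).
rewrite qcomb1 rmorphN /= !lift4X // -/va -/vb -/valpha -/vbeta.
by rewrite /Delta /vs /Qalpha /Qa; ring.
Qed.

Lemma qform_Delta_vp : qform 1 (Delta * vp).
Proof.
exists (fun r => if r is 0%N then 'X_(inord 0) else - 'X_(inord 2)).
rewrite qcomb1 rmorphN /= !lift4X // -/va -/vb -/valpha -/vbeta.
by rewrite /Delta /vp /Qalpha /Qa; ring.
Qed.

Lemma qform_lucas w0 w1 m : qform 0 w0 -> qform 1 (Delta * w1) ->
  qform m (Delta ^+ m * lucas vs (vp ^+ 2) w0 w1 m).
Proof.
move=> hw0 hw1; elim/ltn_ind: m => -[|[|m]] IH.
- by rewrite expr0 mul1r.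
- by rewrite expr1.
have {}IH0 := IH m (leqnSn _); have {IH}IH1 := IH m.+1 (leqnn _).
rewrite lucasSS.
have -> : Delta ^+ m.+2 * (vs * lucas vs (vp ^+ 2) w0 w1 m.+1 -
                           vp ^+ 2 * lucas vs (vp ^+ 2) w0 w1 m) =
          Delta * vs * (Delta ^+ m.+1 * lucas vs (vp ^+ 2) w0 w1 m.+1) -
          Delta * vp * (Delta * vp * (Delta ^+ m * lucas vs (vp ^+ 2) w0 w1 m)).
  by rewrite !exprS; ring.
apply: qformB; first exact: qform1M qform_Delta_vs IH1.
exact: qform1M qform_Delta_vp (qform1M qform_Delta_vp IH0).
Qed.

Lemma qform_quotient (L A B : {mpoly int[6]}) (w0 u v : int) m :
    L != 0 -> L * w0%:~R = A + B ->
    L * (u%:~R * vs + v%:~R * vp) = A * vx ^+ 2 + B * vy ^+ 2 ->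
  exists c, forall q, L * q = A * (vx ^+ 2) ^+ m + B * (vy ^+ 2) ^+ m ->
    Delta ^+ m * q = qcomb m c.
Proof.
move=> L0 h0 h1.
have hw0 : qform 0 w0%:~R by have := qform_lift4 w0%:~R; rewrite (rmorph_int lift4).
have hw1 : qform 1 (Delta * (u%:~R * vs + v%:~R * vp)).
  have -> : Delta * (u%:~R * vs + v%:~R * vp) =
            u%:~R * (Delta * vs) + v%:~R * (Delta * vp) by ring.
  have := qformD (qformZ u%:~R qform_Delta_vs) (qformZ v%:~R qform_Delta_vp).
  by rewrite !(rmorph_int lift4).
have [c hc] := qform_lucas m hw0 hw1.
exists c => q hq; rewrite -hc; congr (_ * _); apply: (mulfI L0).
by rewrite hq (lucas_roots _ _ h0 h1) // exprMn.
Qed.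

Lemma vxD_neq0 : vx + vy != 0.
Proof.
apply/eqP => /(congr1 (meval (fun i : 'I_6 => (val i == 4)%:R))).
by rewrite mevalD meval0 /vx /vy /V6 !mevalXU /= !inordK.
Qed.

Lemma vxB_neq0 : vx - vy != 0.
Proof.
apply/eqP => /(congr1 (meval (fun i : 'I_6 => (val i == 4)%:R))).
by rewrite mevalB meval0 /vx /vy /V6 !mevalXU /= !inordK.
Qed.

Lemma sum_powers_qform (b : bool) m : exists Psi, forall q,
    (vx + vy) ^+ b * q = vx ^+ (b + m.*2) + vy ^+ (b + m.*2) ->
  Delta ^+ m * q = qcomb m Psi.
Proof.
rewrite !exprD -!mul2n !exprM.
have L0 : (vx + vy) ^+ b != 0 := expf_neq0 _ vxD_neq0.
case: b L0 => /= L0.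
- by apply: (qform_quotient (w0 := 1) (u := 1) (v := -1) m L0); rewrite /vs /vp; ring.
- by apply: (qform_quotient (w0 := 2) (u := 1) (v := 0) m L0); rewrite /vs /vp; ring.
Qed.

Lemma diff_powers_qform (b : bool) m : exists Phi, forall q,
    (vx - vy) * (vx + vy) ^+ b * q = vx ^+ (b + m.*2).+1 - vy ^+ (b + m.*2).+1 ->
  Delta ^+ m * q = qcomb m Phi.
Proof.
rewrite -addSn !exprD -!mul2n !exprM -mulNr.
have L0 : (vx - vy) * (vx + vy) ^+ b != 0 := mulf_neq0 vxB_neq0 (expf_neq0 _ vxD_neq0).
case: b L0 => /= L0.
- by apply: (qform_quotient (w0 := 1) (u := 1) (v := 0) m L0); rewrite /vs /vp; ring.
- by apply: (qform_quotient (w0 := 1) (u := 1) (v := 1) m L0); rewrite /vs /vp; ring.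
Qed.

Theorem theorem3p1 (n : nat) (hn : (1 <= n)%N) :
  exists Psi Phi : nat -> {mpoly int[4]},
    (forall q : {mpoly int[6]},
        (vx + vy) ^+ (odd n) * q = vx ^+ n + vy ^+ n ->
        Delta ^+ n./2 * q =
        \sum_(r < n./2.+1) lift4 (Psi r) * Qalpha ^+ (n./2 - r) * Qa ^+ r)
    /\
    (forall q : {mpoly int[6]},
        (vx - vy) * (vx + vy) ^+ (odd n.-1) * q = vx ^+ n - vy ^+ n ->
        Delta ^+ (n.-1)./2 * q =
        \sum_(r < (n.-1)./2.+1) lift4 (Phi r) * Qalpha ^+ ((n.-1)./2 - r) * Qa ^+ r).
Proof.
case: n hn => // k _.
have [Psi hPsi] := sum_powers_qform (odd k.+1) k.+1./2.
have [Phi hPhi] := diff_powers_qform (odd k) k./2.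
rewrite !odd_double_half in hPsi hPhi.
by exists Psi, Phi.
Qed.
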